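(* For all $n\ge1$, $\lfloor n/\varphi\rfloor+1\le f(n)\le\lfloor n\varphi\rfloor$, where $\varphi=(1+\sqrt5)/2$.
   Context: $\mathbb{N}=\{0,1,2,\dots\}$. The sequence $f:\mathbb{N}\to\mathbb{N}$ is defined greedily: $f(0)=0$, and for $n\ge1$, $f(n)$ is the least natural number such that (i) $f(n)\notin\{f(0),f(1),\dots,f(n-1)\}$ and (ii) $\sum_{1\le i\le n} f(i)$ is divisible by $n$. *)

From mathcomp Require Import all_boot all_order all_algebra.
From mathcomp Require Import reals.
Set Implicit Arguments. Unset Strict Implicit. Unset Printing Implicit Defensive.

(* Given s = [:: f 0; ...; f (n-1)] (so n = size s), the greedy next value:
   the least m not in s such that n divides f 1 + ... + f (n-1) + m
   (sumn s also contains f 0 = 0, which does not change the sum).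
   The search range [0, (n+1)^2) suffices: the residues r + k n (k <= n),
   r < n, all lie below (n+1)^2 and at most n of them are already used. *)
Definition greedy_next (s : seq nat) : nat :=
  find (fun m => (m \notin s) && (size s %| sumn s + m))
       (iota 0 ((size s).+1 ^ 2)).

Fixpoint fseq (n : nat) : seq nat :=
  match n with
  | 0 => [:: 0]
  | k.+1 => rcons (fseq k) (greedy_next (fseq k))
  end.

Definition f (n : nat) : nat := last 0 (fseq n).

From mathcomp Require Import all_boot all_order all_algebra.
From mathcomp Require Import reals.
From mathcomp Require Import ring lra zify.
Import Order.TTheory GRing.Theory Num.Theory.

(* Write g k = floor (k / phi), i.e. [divphi k].  As 1 < phi < 2, g grows by 0 or 1 at
   each step and is never flat twice in a row.  For k >= 1 the greedy sequence is
     f k = g k + 1                       if g (k - 1) = g k  (a flat step),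
     f k = k + g k = floor (k * phi)     otherwise           (a jump),
   from which both bounds are immediate.  The closed form is proved by induction: its
   partial sums are f 1 + ... + f n = n (g n + 1), so the divisibility condition at step
   n + 1 singles out one residue class modulo n + 1, whose least unused member is the
   closed-form value.  This uses that the closed-form values are pairwise distinct (a flat
   value never equals a jump value, by phi ^ 2 = phi + 1) and that every v + 1 with
   v < g N is already the value of some k < N. *)

Lemma find_iota0 (p : pred nat) n t : t < n -> p t ->
  (forall m, m < t -> ~~ p m) -> find p (iota 0 n) = t.
Proof.
move=> t_lt p_t below.
have has_p : has p (iota 0 n) by apply/hasP; exists t; rewrite ?mem_iota.
have i_lt : find p (iota 0 n) < n by rewrite -[n in _ < n](size_iota 0) -has_find.
have p_i := nth_find 0 has_p; rewrite nth_iota // in p_i.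
case: (ltngtP (find p (iota 0 n)) t) => // [lt_it | lt_ti].
  by have := below _ lt_it; rewrite p_i.
by have := before_find 0 lt_ti; rewrite nth_iota ?p_t // (ltn_trans lt_ti).
Qed.

Lemma greedy_next_eq s t : t < (size s).+1 ^ 2 -> t \notin s ->
  size s %| sumn s + t ->
  (forall m, m < t -> m \notin s -> ~~ (size s %| sumn s + m)) ->
  greedy_next s = t.
Proof.
move=> t_lt t_new t_dvd below; apply: find_iota0; rewrite ?t_new //.
by move=> m /below; case: (m \in s) => // /(_ isT).
Qed.

Lemma dvdn_addr_mod {d a t} m : d %| a + t -> (d %| a + m) = (m == t %[mod d]).
Proof. by rewrite /dvdn => /eqP at0; rewrite -at0 eqn_modDl. Qed.

Lemma eqn_mod_gap d m t : m < t < m + d -> (m == t %[mod d]) = false.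
Proof. by move=> mt; rewrite eq_sym eqn_mod_dvd; [apply/negP => /dvdn_leq; lia | lia]. Qed.

Lemma unit_steps_hit (g : nat -> nat) N v : g 0 = 0 ->
  (forall k, g k.+1 <= (g k).+1) -> v < g N ->
  exists2 m, m < N & g m = v /\ g m.+1 = v.+1.
Proof.
move=> g0 gS; elim: N => [|N IH]; first by rewrite g0.
case: (ltnP v (g N)) => [/IH [m lt_mN gm] _ | le_gN lt_vgN].
  by exists m; first exact: ltnW.
by exists N => //; have := gS N; lia.
Qed.

Section GoldenRatio.
Variable R : realType.
Local Open Scope ring_scope.

Definition phi : R := (1 + Num.sqrt 5) / 2.

Lemma sqrt5_sqr : Num.sqrt 5 * Num.sqrt 5 = 5 :> R.
Proof. by rewrite -expr2 sqr_sqrtr. Qed.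

Lemma phi_sqr : phi * phi = phi + 1.
Proof. by have := sqrt5_sqr; rewrite /phi; lra. Qed.

Lemma phi_gt1 : 1 < phi.
Proof. by have := sqrt5_sqr; have := sqrtr_ge0 (5 : R); rewrite /phi; nra. Qed.

Lemma phi_lt2 : phi < 2.
Proof. by have := sqrt5_sqr; have := sqrtr_ge0 (5 : R); rewrite /phi; nra. Qed.

Lemma phi_gt0 : 0 < phi. Proof. exact: lt_trans phi_gt1. Qed.

Lemma invphi : phi^-1 = phi - 1.
Proof.
have phi_neq0 : phi != 0 by rewrite gt_eqF // phi_gt0.
by apply: (mulfI phi_neq0); rewrite mulfV // mulrBr mulr1 phi_sqr; ring.
Qed.

Definition divphi (k : nat) : nat := Num.truncn (k%:R / phi).

Lemma divphi_bounds k :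
  (divphi k)%:R * phi <= k%:R < ((divphi k)%:R + 1) * phi.
Proof.
have := truncn_itv (divr_ge0 (ler0n R k) (ltW phi_gt0)).
by rewrite -/(divphi k) -natr1 ler_pdivlMr ?ltr_pdivrMr ?phi_gt0.
Qed.

Lemma divphi_eq k u : u%:R * phi <= k%:R < (u%:R + 1) * phi -> divphi k = u.
Proof.
move=> k_itv; apply: truncn_def.
by rewrite -natr1 ler_pdivlMr ?ltr_pdivrMr ?phi_gt0.
Qed.

Lemma divphi0 : divphi 0 = 0%N.
Proof. by apply: divphi_eq; rewrite mul0r add0r mul1r lexx phi_gt0. Qed.

Lemma divphi1 : divphi 1 = 0%N.
Proof. by apply: divphi_eq; rewrite mul0r add0r mul1r ler01 phi_gt1. Qed.

Lemma divphiS k : divphi k.+1 = divphi k \/ divphi k.+1 = (divphi k).+1.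
Proof.
have /andP[lo hi] := divphi_bounds k; have := phi_gt1.
case: (ltrP (k%:R + 1) ((divphi k)%:R * phi + phi)) => k1 *.
  by left; apply: divphi_eq; rewrite -natr1; apply/andP; lra.
by right; apply: divphi_eq; rewrite -!natr1; apply/andP; lra.
Qed.

Lemma divphiS_le k : (divphi k.+1 <= (divphi k).+1)%N.
Proof. by case: (divphiS k) => ->. Qed.

Lemma divphi_jump k : divphi k != divphi k.+1 -> divphi k.+1 = (divphi k).+1.
Proof. by case: (divphiS k) => ->; rewrite ?eqxx. Qed.

Lemma divphi_homo : {homo divphi : m n / (m <= n)%N}.
Proof.
apply: homo_leq => [//|y x z|k]; first exact: leq_trans.
by case: (divphiS k) => ->.
Qed.

Lemma divphi_ltn k : (0 < k)%N -> (divphi k < k)%N.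
Proof.
move=> k_gt0; have /andP[lo _] := divphi_bounds k; have := phi_gt1.
have : 1 <= k%:R :> R by rewrite ler1n.
rewrite -(ltr_nat R); nra.
Qed.

Lemma divphiSS k : divphi k.+2 != divphi k.
Proof.
apply/eqP => e; have /andP[lo _] := divphi_bounds k.
have /andP[_ hi] := divphi_bounds k.+2; rewrite e -!natr1 in hi.
have := phi_lt2; lra.
Qed.

Lemma floor_divphi n : Num.floor (n%:R / phi) = (divphi n)%:Z.
Proof.
have x_ge0 := divr_ge0 (ler0n R n) (ltW phi_gt0).
by rewrite /divphi truncn_floor x_ge0 gez0_abs // floor_ge0.
Qed.

Lemma floor_mulphi n : Num.floor (n%:R * phi) = (n + divphi n)%:Z.
Proof.
have -> : n%:R * phi = n%:R + n%:R / phi by rewrite invphi; ring.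
by rewrite floorDzr ?natr_int // floor_divphi pmulrn intrKfloor.
Qed.

Lemma flat_jump_gap (u k j : R) : u * phi <= k -> k + 1 < (u + 1) * phi ->
  u < j * phi * phi -> j * phi * phi <= u + 1 -> 2 * u < k + j < 2 * u + 1.
Proof.
move=> lo hi ju uj; have p2 := phi_sqr; have p1 := phi_gt1; have lt2 := phi_lt2.
(* phi ^ -2 = 2 - phi *)
have q : (phi + 1) * (2 - phi) = 1 by lra.
have ej : j * phi * phi * (2 - phi) = j by rewrite -(mulrA j) p2 -mulrA q mulr1.
apply/andP; split; nra.
Qed.

Lemma double_jump_gap (v m : R) : m < (v + 1) * phi -> (v + 2) * phi <= m + 2 ->
  m - v - 1 < (2 * v + 2 - m) * phi <= m - v.
Proof.
move=> lo hi; have p2 := phi_sqr; have p1 := phi_gt1.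
have lo' : m * phi < (v + 1) * phi * phi by rewrite ltr_pM2r // (lt_trans ltr01).
have hi' : (v + 2) * phi * phi <= (m + 2) * phi by rewrite ler_pM2r // (lt_trans ltr01).
have e1 : (v + 1) * phi * phi = (v + 1) * phi + v + 1 by rewrite -mulrA p2; ring.
have e2 : (v + 2) * phi * phi = (v + 2) * phi + v + 2 by rewrite -mulrA p2; ring.
apply/andP; split; lra.
Qed.

(* The witness is K = m - g m - 1, where g K = 2 g m + 1 - m. *)
Lemma double_jump_value m :
  divphi m.+1 = (divphi m).+1 -> divphi m.+2 = (divphi m).+2 ->
  exists K, divphi K.+1 = (divphi K).+1 /\ (K.+1 + divphi K.+1 = (divphi m).+2)%N.
Proof.
set v := divphi m => jump1 jump2.
have /andP[_ lo] := divphi_bounds m.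
have /andP[hi _] := divphi_bounds m.+2; rewrite jump2 -!natr1 in hi.
have /andP[gap_lo gap_hi] :
    (m%:R : R) - v%:R - 1 < (2 * v%:R + 2 - m%:R) * phi <= m%:R - v%:R.
  by apply: double_jump_gap lo _; lra.
have lt_vm : (v < m)%N by have := divphi_ltn m.+1 isT; rewrite jump1.
have lt_m2v : (m < v + v + 2)%N.
  by rewrite -(ltr_nat R) !natrD; have := phi_lt2; have := ler0n R v; nra.
have p1 := phi_gt1.
have K_R : (m - v.+1)%:R = m%:R - v%:R - 1 :> R by rewrite natrB // -natr1 opprD addrA.
have K1_R : (m - v.+1).+1%:R = m%:R - v%:R :> R by rewrite -natr1 K_R; lra.
have X_R : (v + v + 1 - m)%:R = 2 * v%:R + 1 - m%:R :> R.
  by rewrite natrB ?natrD; [lra | lia].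
have X1_R : (v + v + 2 - m)%:R = 2 * v%:R + 2 - m%:R :> R.
  by rewrite natrB ?natrD; [lra | lia].
have gK : divphi (m - v.+1) = (v + v + 1 - m)%N.
  by apply: divphi_eq; rewrite K_R X_R; apply/andP; lra.
have gK1 : divphi (m - v.+1).+1 = (v + v + 2 - m)%N.
  by apply: divphi_eq; rewrite K1_R X1_R; apply/andP; lra.
by exists (m - v.+1)%N; rewrite gK gK1; split; lia.
Qed.

Lemma flat_value_neq_jump_value k k' :
  divphi k = divphi k.+1 -> divphi k'.+1 = (divphi k').+1 ->
  (divphi k.+1).+1 != (k'.+1 + divphi k'.+1)%N.
Proof.
set u := divphi k.+1; set j := divphi k'.+1 => flat jump; apply/eqP => e.
have /andP[lo _] := divphi_bounds k; rewrite flat in lo.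
have /andP[_ hi] := divphi_bounds k.+1.
have /andP[_ lo'] := divphi_bounds k'; rewrite natr1 -jump in lo'.
have /andP[hi' _] := divphi_bounds k'.+1.
have e_R : u%:R + 1 = k'%:R + 1 + j%:R :> R by rewrite natr1 e natrD -natr1.
have ej : j%:R * phi * phi = j%:R * phi + j%:R :> R.
  by rewrite -mulrA phi_sqr mulrDr mulr1.
rewrite -!natr1 in hi hi'.
have /andP[gap_lo gap_hi] : (2 * u%:R : R) < k%:R + j%:R < (2 * u%:R + 1 : R).
  by apply: flat_jump_gap; lra.
have : (u + u < k + j)%N by rewrite -(ltr_nat R) !natrD; lra.
have : (k + j < u + u + 1)%N by rewrite -(ltr_nat R) !natrD; lra.
lia.
Qed.

Local Close Scope ring_scope.

Lemma divphi_leq k : divphi k <= k.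
Proof. by case: k => [|k]; rewrite ?divphi0 // ltnW ?divphi_ltn. Qed.

Lemma divphi_flat_ltn a b : a < b -> divphi a = divphi a.+1 ->
  divphi a.+1 < divphi b.+1.
Proof.
move=> lt_ab flat; have step : divphi a.+2 = (divphi a.+1).+1.
  by apply: divphi_jump; rewrite -flat eq_sym divphiSS.
by rewrite -step divphi_homo.
Qed.

Definition fphi (k : nat) : nat :=
  if k is k'.+1 then
    if divphi k' == divphi k then (divphi k).+1 else k + divphi k
  else 0.

Lemma fphi_flat k : divphi k = divphi k.+1 -> fphi k.+1 = (divphi k.+1).+1.
Proof. by rewrite /fphi => ->; rewrite eqxx. Qed.

Lemma fphi_jump k : divphi k.+1 = (divphi k).+1 -> fphi k.+1 = k.+1 + divphi k.+1.
Proof. by rewrite /fphi => ->; rewrite ltn_eqF. Qed.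

Lemma fphi_cover N v : v < divphi N -> exists2 k, 0 < k < N & fphi k = v.+1.
Proof.
move=> lt_vN; have N_gt0 : 0 < N by case: N lt_vN; rewrite ?divphi0.
have lt_gN := divphi_ltn N N_gt0.
have [[|m] lt_mN [gm gm1]] := unit_steps_hit _ _ _ divphi0 divphiS_le lt_vN.
  by rewrite divphi1 -gm divphi0 in gm1.
have [flat | /divphi_jump jump] := eqVneq (divphi m) (divphi m.+1).
  by exists m.+1; [rewrite lt_mN | rewrite fphi_flat // gm].
have jump2 : divphi m.+2 = (divphi m).+2 by rewrite gm1 -gm jump.
have [K [jumpK eK]] := double_jump_value m jump jump2.
exists K.+1; last by rewrite fphi_jump // eK -jump gm.
lia.
Qed.

Lemma fphi_gt0 k : 0 < k -> 0 < fphi k.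
Proof. by case: k => //= k _; case: eqP => _; rewrite ?addSn. Qed.

Lemma fphi_neq a b : 0 < a < b -> fphi a != fphi b.
Proof.
case: a => // a; case: b => // b /andP[_]; rewrite ltnS => lt_ab.
have [flat_a | /divphi_jump jump_a] := eqVneq (divphi a) (divphi a.+1);
have [flat_b | /divphi_jump jump_b] := eqVneq (divphi b) (divphi b.+1).
- by rewrite !fphi_flat // eqSS ltn_eqF // divphi_flat_ltn.
- by rewrite fphi_flat // fphi_jump // flat_value_neq_jump_value.
- by rewrite fphi_jump // fphi_flat // eq_sym flat_value_neq_jump_value.
- rewrite !fphi_jump // ltn_eqF //.
  by have := @divphi_homo a.+1 b.+1 (ltnW lt_ab); lia.
Qed.

Lemma sumn_fphi n : sumn (mkseq fphi n.+1) = n * (divphi n).+1.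
Proof.
elim: n => [//|n IH]; rewrite mkseqS sumn_rcons IH.
have [flat | /divphi_jump jump] := eqVneq (divphi n) (divphi n.+1).
  by rewrite fphi_flat // -flat addnC -mulSn.
by rewrite fphi_jump // jump; nia.
Qed.

Lemma fphi_notin n : fphi n.+1 \notin mkseq fphi n.+1.
Proof.
apply/mapP => -[[|k]]; rewrite mem_iota add0n ltnS => /andP[_ le_kn].
  by apply/eqP; rewrite gtn_eqF ?fphi_gt0.
by move/eqP; apply/negP; rewrite eq_sym; apply: fphi_neq; exact: le_kn.
Qed.

Lemma greedy_next_fphi n : greedy_next (mkseq fphi n.+1) = fphi n.+1.
Proof.
set s := mkseq fphi n.+1; have fresh : fphi n.+1 \notin s := fphi_notin n.
have fphi_in k : k <= n -> fphi k \in s.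
  by move=> le_kn; apply: map_f; rewrite mem_iota.
have zero_in : 0 \in s := fphi_in 0 (leq0n n).
have le_gn := divphi_leq n.
have [flat | /divphi_jump jump] := eqVneq (divphi n) (divphi n.+1).
  rewrite fphi_flat // -flat in fresh *.
  have dvd : n.+1 %| n * (divphi n).+1 + (divphi n).+1.
    by rewrite addnC -mulSn dvdn_mulr.
  apply: greedy_next_eq; rewrite ?size_mkseq ?sumn_fphi //; first by nia.
  move=> [|m] lt_m m_new; first by rewrite zero_in in m_new.
  by rewrite (dvdn_addr_mod _ dvd) eqn_mod_gap // lt_m; lia.
rewrite fphi_jump // jump in fresh *.
have dvd : n.+1 %| n * (divphi n).+1 + (n.+1 + (divphi n).+1).
  by apply/dvdnP; exists (divphi n).+2; nia.
apply: greedy_next_eq; rewrite ?size_mkseq ?sumn_fphi //; first by nia.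
have lt_gn : divphi n < n by have := divphi_ltn n.+1 isT; rewrite jump.
move=> m lt_m m_new; rewrite (dvdn_addr_mod _ dvd).
have [lt_mg | gt_mg | eq_mg] := ltngtP m (divphi n).+1.
- by rewrite modnDl eqn_mod_gap // lt_mg; lia.
- by rewrite eqn_mod_gap // lt_m; lia.
have [k /andP[_ lt_kn] fk] := @fphi_cover n.+1 (divphi n) (eq_leq (esym jump)).
by rewrite eq_mg -fk fphi_in in m_new.
Qed.

Lemma fseq_mkseq n : fseq n = mkseq fphi n.+1.
Proof. by elim: n => [//|n IH]; rewrite [LHS]/= IH greedy_next_fphi -mkseqS. Qed.

Lemma f_fphi n : f n = fphi n.
Proof. by rewrite /f fseq_mkseq mkseqS last_rcons. Qed.

Lemma fphi_bounds k : 0 < k -> (divphi k).+1 <= fphi k <= k + divphi k.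
Proof. by case: k => //= k _; case: eqP => _; lia. Qed.

End GoldenRatio.

Theorem corollary5 (R : realType) (n : nat) : (1 <= n)%N ->
  let phi : R := ((1 + Num.sqrt 5) / 2)%R in
  (Num.floor (n%:R / phi) + 1 <= (f n)%:Z)%R /\
  ((f n)%:Z <= Num.floor (n%:R * phi))%R.
Proof.
move=> n_gt0 phi'; rewrite /phi' floor_divphi floor_mulphi (f_fphi R).
by have := fphi_bounds R n n_gt0; lia.
Qed.
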